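(* For the Ewens distribution $p^\star$, $p^\star_N(\pi)=\frac{\prod_{B\in\pi}(b-1)!}{n!}$, the restriction operator $r^\star:=r^{p^\star}$ is given by $$w^{r^\star}_{-i}(S,\pi)=\frac{1}{n-s}w(S,\pi_{+i\leadsto\emptyset})+\sum_{B\in\pi}\frac{b}{n-s}w(S,\pi_{+i\leadsto B})$$ for all $N\subseteq\mathbf{U}$, $w\in\mathbb{W}(N)$, $i\in N$, $(S,\pi)\in\mathcal{E}(N\setminus\{i\})$. Moreover, the $r^\star$-Shapley value coincides with the MPW solution: $\mathrm{Sh}^{r^\star}=\mathrm{MPW}$.
   Context: $\mathbf{U}$ is a finite set of players; cardinalities of $N,S,B$ are $n,s,b$. $\Pi(N)$ is the set of partitions of $N$ ($\Pi(\emptyset)=\{\emptyset\}$). A random partition is $p=(p_N)_{N\subseteq\mathbf{U}}$ with $p_N$ a probability distribution on $\Pi(N)$. $\pi_{+i\leadsto B}=(\pi\setminus\{B\})\cup\{B\cup\{i\}\}$ for $B\in\pi$; $\pi_{+i\leadsto\emptyset}=\pi\cup\{\{i\}\}$. Embedded coalitions $\mathcal{E}(N)=\{(S,\pi):S\subseteq N,\pi\in\Pi(N\setminus S)\}$; a TUX game on $N$ is $w:\mathcal{E}(N)\to\mathbb{R}$ with $w(\emptyset,\pi)=0$, $\mathbb{W}(N)$ their set. For a positive random partition $p$, $r^p$ is the restriction operator $w^{r^p}_{-i}(S,\pi)=\frac{n}{n-s}\sum_{B\in\pi\cup\{\emptyset\}}\frac{p_N(\{S\}\cup\pi_{+i\leadsto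 B})}{p_{N\setminus\{i\}}(\{S\}\cup\pi)}w(S,\pi_{+i\leadsto B})$, which yields $w^{r^p}_{-i}\in\mathbb{W}(N\setminus\{i\})$ and is path independent, so $w^{r}_{-T}$ is well defined for $T\subseteq N$. The Shapley value of a TU game $v$ on $N$ is $\mathrm{Sh}_i(v)=\sum_{S\subseteq N\setminus\{i\}}\frac{s!(n-s-1)!}{n!}(v(S\cup\{i\})-v(S))$. For a path independent restriction operator $r$, the $r$-Shapley value is $\mathrm{Sh}^r(w)=\mathrm{Sh}(v^r_w)$ with $v^r_w(S)=w^r_{-(N\setminus S)}(S,\emptyset)$. The MPW solution is $\mathrm{MPW}(w)=\mathrm{Sh}(\bar v^\star_w)$ with $\bar v^\star_w(S)=\sum_{\pi\in\Pi(N\setminus S)}p^\star_{N\setminus S}(\pi)w(S,\pi)$. *)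

From HB Require Import structures.
From mathcomp Require Import all_boot all_order all_algebra.
Set Implicit Arguments. Unset Strict Implicit. Unset Printing Implicit Defensive.
Import Order.TTheory GRing.Theory Num.Theory.
Local Open Scope ring_scope.

Section Defs.
Variables (U : finType) (R : realFieldType).

(* Partitions of N: {set {set U}} with mathcomp's [partition P N]
   (cover P = N, pairwise disjoint blocks, no empty block).
   Pi(set0) = {set0}. *)

Definition rpart := {set U} -> {set {set U}} -> R.

(* A TUX game (on some N) is represented as a total function on pairs
   (S, pi); only its values on embedded coalitions E(N) matter. *)
Definition tux := {set U} -> {set {set U}} -> R.

Definition tux_game (N : {set U}) (w : tux) : Prop :=
  forall pi : {set {set U}}, partition pi N -> w set0 pi = 0.

(* pi_{+i ~> B} ; B = set0 encodes the empty-set case. *)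
Definition plus_to (pi : {set {set U}}) (i : U) (B : {set U}) : {set {set U}} :=
  if B == set0 then pi :|: [set [set i]]
  else (pi :\ B) :|: [set B :|: [set i]].

Definition ewens : rpart := fun N pi =>
  (\prod_(B in pi) (#|B|.-1)`!)%:R / (#|N|)`!%:R.

Definition restr (p : rpart) (N : {set U}) (i : U) (w : tux) : tux :=
  fun S pi =>
    (#|N|%:R / (#|N| - #|S|)%:R) *
    \sum_(B in pi :|: [set set0])
       (p N ([set S] :|: plus_to pi i B) / p (N :\ i) ([set S] :|: pi))
       * w S (plus_to pi i B).

(* Iterated restriction w^r_{-T}, removing the players of the sequence
   in order (path independence makes the order irrelevant). *)
Fixpoint restr_seq (p : rpart) (N : {set U}) (w : tux) (s : seq U) : tux :=
  match s with
  | [::] => w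
  | i :: s' => restr_seq p (N :\ i) (restr p N i w) s'
  end.

Definition restrT (p : rpart) (N : {set U}) (w : tux) (T : {set U}) : tux :=
  restr_seq p N w (enum T).

Definition shapley (N : {set U}) (v : {set U} -> R) (i : U) : R :=
  \sum_(S in powerset (N :\ i))
    ((#|S|)`! * (#|N| - #|S| - 1)`!)%:R / (#|N|)`!%:R
      * (v (S :|: [set i]) - v S).

Definition v_r (p : rpart) (N : {set U}) (w : tux) : {set U} -> R :=
  fun S => restrT p N w (N :\: S) S set0.

Definition r_shapley (p : rpart) (N : {set U}) (w : tux) (i : U) : R :=
  shapley N (v_r p N w) i.

Definition vbar_star (N : {set U}) (w : tux) : {set U} -> R :=
  fun S => \sum_(pi : {set {set U}} | partition pi (N :\: S))
             ewens (N :\: S) pi * w S pi.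

Definition MPW (N : {set U}) (w : tux) (i : U) : R :=
  shapley N (vbar_star N w) i.

End Defs.

From mathcomp Require Import all_boot all_order all_algebra.
From mathcomp Require Import ring.
Import Order.TTheory GRing.Theory Num.Theory.
Local Open Scope ring_scope.
Set Implicit Arguments. Unset Strict Implicit.

(** Inserting player [i] into a partition [tau] of [A], either as a singleton
   or into a block [B], reaches every partition of [A :|: [set i]] exactly
   once: the inverse removes [i] from its block.  The Ewens weight
   [prod (b - 1)!] gets multiplied by [max 1 b] and [n!] by [n], which gives
   the explicit form of the restriction operator.  Averaging that formula
   against the Ewens distribution of the remaining players reproduces the
   Ewens distribution one player up, so restricting away the players of
   [N :\: S] one at a time turns [w S] into its Ewens average, i.e.
   [v_r ewens N w = vbar_star N w], and the two Shapley values agree. *)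

Lemma setD1_notin (T : finType) (A : {set T}) x : x \notin A -> A :\ x = A.
Proof. by move=> xA; apply/setDidPl; rewrite disjoint_sym disjoints1. Qed.

Lemma setD_D1U1 (T : finType) (N S : {set T}) i : i \in N -> i \notin S ->
  (N :\ i) :\: S :|: [set i] = N :\: S.
Proof.
move=> iN iS; apply/setP => x; rewrite !inE.
by case: (x =P i) => [->|] /=; rewrite ?iN ?(negbTE iS) ?orbF.
Qed.

Lemma notin_partition_setD (T : finType) (X S : {set T}) (P : {set {set T}}) :
  partition P (X :\: S) -> S \notin P.
Proof.
move=> pP; apply/negP => SP; have /set0Pn[x xS] := partition_neq0 pP SP.
by have /setDP[_] := subsetP (partitionS pP SP) x xS; rewrite xS.
Qed.

Lemma fact_maxn1 n : (n`! = maxn 1 n * n.-1`!)%N.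
Proof. by case: n => // n; rewrite factS (maxn_idPr _). Qed.

Section PlusTo.
Variables (U : finType) (A : {set U}) (i : U).
Hypothesis notiA : i \notin A.
Implicit Types (B : {set U}) (tau sigma : {set {set U}}).

Lemma plus_toE tau B :
  set0 \notin tau -> plus_to tau i B = (B :|: [set i]) |: (tau :\ B).
Proof.
rewrite /plus_to; case: eqP => [-> tau0 | _ _]; last by rewrite setUC.
by rewrite set0U setD1_notin // setUC.
Qed.

Section Blocks.
Variables (tau : {set {set U}}) (B : {set U}).
Hypotheses (ptau : partition tau A) (Btau : B \in tau :|: [set set0]).

Lemma target_sub : B \subset A.
Proof.
by case/setUP: Btau => [/(partitionS ptau) // | /set1P ->]; exact: sub0set.
Qed.

Lemma partition_setD1_target : partition (tau :\ B) (A :\: B).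
Proof.
case/setUP: Btau => [/(partitionD1 ptau) // | /set1P ->].
by rewrite setD0 setD1_notin ?(partition0 ptau).
Qed.

Lemma notin_target : i \notin B.
Proof. by apply: contra notiA; apply/subsetP/target_sub. Qed.

Lemma target_setU1_notin : B :|: [set i] \notin tau :\ B.
Proof.
apply: contra notiA => /setD1P[_ /(partitionS ptau)/subsetP]; apply.
by rewrite !inE eqxx orbT.
Qed.

Lemma plus_to_partition : partition (plus_to tau i B) (A :|: [set i]).
Proof.
rewrite plus_toE ?(partition0 ptau) //.
have -> : A :|: [set i] = (B :|: [set i]) :|: (A :\: B).
  by rewrite setUAC -{1}(setID A B) (setIidPr target_sub).
apply: partitionU1 partition_setD1_target _ _.
  by apply/set0Pn; exists i; rewrite !inE eqxx orbT.
rewrite -setI_eq0; apply/eqP/setP => x; rewrite !inE.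
by case: (x =P i) => [->|_]; [rewrite (negbTE notiA) !andbF | case: (x \in B)].
Qed.

End Blocks.

(* [:\ set0] drops the empty block left behind when [i] was a singleton. *)
Definition plus_to_inv sigma : {set {set U}} * {set U} :=
  let P := pblock sigma i in ((P :\ i |: (sigma :\ P)) :\ set0, P :\ i).

Lemma plus_toK tau B : partition tau A -> B \in tau :|: [set set0] ->
  plus_to_inv (plus_to tau i B) = (tau, B).
Proof.
move=> ptau Btau; have psig := plus_to_partition ptau Btau.
have notiB := notin_target ptau Btau.
have tau0 := partition0 ptau.
have def_P : pblock (plus_to tau i B) i = B :|: [set i].
  apply: def_pblock (partition_trivIset psig) _ _; last by rewrite !inE eqxx orbT.
  by rewrite plus_toE ?tau0 // setU11.
rewrite /plus_to_inv def_P.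
have -> : (B :|: [set i]) :\ i = B by rewrite setDUl setDv setU0 setD1_notin.
congr pair.
rewrite plus_toE ?tau0 // setU1K ?target_setU1_notin //.
case/setUP: Btau => [Btau | /set1P ->]; first by rewrite setD1K // setD1_notin ?tau0.
by rewrite setU1K ?setD11 // setD1_notin ?tau0.
Qed.

Section Inverse.
Variable sigma : {set {set U}}.
Hypothesis psig : partition sigma (A :|: [set i]).
Let P := pblock sigma i.
Let B := P :\ i.

Let tsig : trivIset sigma. Proof. exact: partition_trivIset psig. Qed.
Let iP : i \in P.
Proof. by rewrite mem_pblock (cover_partition psig) !inE eqxx orbT. Qed.
Let Psig : P \in sigma. Proof. by rewrite pblock_mem // -mem_pblock. Qed.

Let notBsig : B \notin sigma.
Proof.
apply/negP => Bsig; have /set0Pn[x xB] := partition_neq0 psig Bsig.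
have xP : x \in P by case/setD1P: xB.
have eBP : B = P by rewrite -(def_pblock tsig Bsig xB) (def_pblock tsig Psig xP).
by have := iP; rewrite -eBP !inE eqxx.
Qed.

Lemma plus_to_invK : plus_to (plus_to_inv sigma).1 i (plus_to_inv sigma).2 = sigma.
Proof.
rewrite /plus_to_inv -/P -/B plus_toE ?setD11 //=.
have -> : B :|: [set i] = P by rewrite setUC setD1K.
have -> : (B |: (sigma :\ P)) :\ set0 :\ B = sigma :\ P.
  apply/setP => C; rewrite !inE; case: (C =P B) => [-> | _] /=.
    by rewrite (negbTE notBsig) andbF.
  by case: (C =P set0) => [-> | //]; rewrite (partition0 psig) andbF.
by rewrite setD1K.
Qed.

Lemma plus_to_inv_partition : let: (tau, B) := plus_to_inv sigma in
  partition tau A && (B \in tau :|: [set set0]).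
Proof.
rewrite /plus_to_inv -/P -/B /=.
have pX := partitionD1 psig Psig.
have eA : A = B :|: ((A :|: [set i]) :\: P).
  apply/setP => x; rewrite !inE; have := subsetP (partitionS psig Psig) x.
  rewrite !inE; case: (x =P i) => [->|_] /=; first by rewrite (negbTE notiA) iP.
  by rewrite orbF; case: (x \in P) => // ->.
case: (B =P set0) => [B0 | /eqP B0].
  rewrite B0 setU1K; last by rewrite (partition0 pX).
  by rewrite {1}eA B0 set0U pX !inE eqxx orbT.
rewrite setD1_notin; last by rewrite in_setU1 negb_or eq_sym B0 (partition0 pX).
rewrite !inE eqxx /= andbT {1}eA; apply: partitionU1 pX B0 _.
rewrite -setI_eq0; apply/eqP/setP => x; rewrite !inE.
by case: (x \in P); rewrite !andbF.
Qed.

End Inverse.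

Lemma big_partition_setU1 (R : Type) (idx : R) (op : Monoid.com_law idx)
    (F : {set {set U}} -> R) :
  \big[op/idx]_(sigma | partition sigma (A :|: [set i])) F sigma =
  \big[op/idx]_(tau | partition tau A)
     \big[op/idx]_(B in tau :|: [set set0]) F (plus_to tau i B).
Proof.
rewrite (reindex_onto (fun tB => plus_to tB.1 i tB.2) plus_to_inv);
  last by move=> sigma; apply: plus_to_invK.
rewrite (pair_big_dep (fun tau => partition tau A)
  (fun tau B => B \in tau :|: [set set0]) (fun tau B => F (plus_to tau i B))).
apply: eq_bigl => -[tau B] /=.
apply/idP/idP => [/andP[psig /eqP e] | /andP[ptau Btau]].
  by have := plus_to_inv_partition psig; rewrite e.
by rewrite plus_to_partition // plus_toK // eqxx.
Qed.

End PlusTo.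

Section Ewens.
Variables (U : finType) (R : realFieldType).
Implicit Types (A B N S : {set U}) (tau : {set {set U}}).

Definition block_weight tau : nat := \prod_(B in tau) (#|B|.-1)`!.

Lemma ewensE N tau : ewens R N tau = (block_weight tau)%:R / (#|N|`!)%:R.
Proof. by []. Qed.

Lemma block_weight_gt0 tau : (0 < block_weight tau)%N.
Proof. by apply: prodn_gt0 => B; apply: fact_gt0. Qed.

Lemma block_weight_plus_to A i tau B : i \notin A -> partition tau A ->
  B \in tau :|: [set set0] ->
  block_weight (plus_to tau i B) = (maxn 1 #|B| * block_weight tau)%N.
Proof.
move=> notiA ptau Btau; have notiB := notin_target notiA ptau Btau.
rewrite /block_weight plus_toE ?(partition0 ptau) //.
rewrite big_setU1 ?(target_setU1_notin notiA) //= setUC cardsU1 notiB add1n.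
rewrite (fact_maxn1 #|B|) -mulnA.
congr (_ * _)%N; case/setUP: Btau => [Btau | /set1P ->].
  by rewrite [RHS](big_setD1 B).
by rewrite cards0 mul1n setD1_notin ?(partition0 ptau).
Qed.

Lemma ewens_plus_to A i tau B : i \notin A -> partition tau A ->
    B \in tau :|: [set set0] ->
  ewens R (A :|: [set i]) (plus_to tau i B) =
    (maxn 1 #|B|)%:R / #|A :|: [set i]|%:R * ewens R A tau.
Proof.
move=> notiA ptau Btau.
rewrite !ewensE (block_weight_plus_to notiA ptau Btau) setUC cardsU1 notiA add1n.
rewrite factS !natrM; field.
by rewrite !nat1r !pnatr_eq0 -!lt0n ?fact_gt0 ?block_weight_gt0.
Qed.

Lemma restr_ewens N i (w : tux U R) S tau : i \in N -> S \subset N :\ i ->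
    partition tau ((N :\ i) :\: S) ->
  restr (ewens R) N i w S tau =
    \sum_(B in tau :|: [set set0])
       (maxn 1 #|B|)%:R / (#|N| - #|S|)%:R * w S (plus_to tau i B).
Proof.
move=> iN /subsetD1P[sSN iS] ptau.
have notiA : i \notin (N :\ i) :\: S by rewrite !inE eqxx andbF.
rewrite /restr big_distrr; apply: eq_bigr => B Btau /=; rewrite mulrA; congr (_ * _).
have psig := plus_to_partition notiA ptau Btau; rewrite setD_D1U1 // in psig.
rewrite !ewensE /block_weight !big_setU1 ?(notin_partition_setD ptau)
  ?(notin_partition_setD psig) //=.
rewrite -!/(block_weight _) (block_weight_plus_to notiA ptau Btau).
have [m Em] : exists m, #|N| = m.+1 by exists #|N :\ i|; rewrite (cardsD1 i N) iN.
have cNi : #|N :\ i| = m by move: Em; rewrite (cardsD1 i N) iN => -[].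
have : (#|S| < #|N|)%N by rewrite Em ltnS -cNi subset_leq_card // subsetD1 sSN.
rewrite -subn_gt0 Em cNi factS !natrM => sS; field.
by rewrite !nat1r !pnatr_eq0 -!lt0n sS ?fact_gt0 ?block_weight_gt0.
Qed.

Lemma restr_ewensE N i (w : tux U R) S tau : i \in N -> S \subset N :\ i ->
    partition tau ((N :\ i) :\: S) ->
  restr (ewens R) N i w S tau =
    1 / (#|N| - #|S|)%:R * w S (plus_to tau i set0)
    + \sum_(B in tau) (#|B|%:R / (#|N| - #|S|)%:R) * w S (plus_to tau i B).
Proof.
move=> iN sS ptau; rewrite restr_ewens // setUC big_setU1 ?(partition0 ptau) //=.
rewrite cards0; congr (_ + _); apply: eq_bigr => B Btau.
by rewrite (maxn_idPr _) // card_gt0 (partition_neq0 ptau Btau).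
Qed.

Lemma restr_seq_ewens s N (w : tux U R) S : uniq s -> S \subset N ->
  [set x in s] = N :\: S -> restr_seq (ewens R) N w s S set0 = vbar_star N w S.
Proof.
elim: s N w => [|i s IHs] N w /=.
  move=> _ _; rewrite set_nil /vbar_star => <-.
  rewrite (eq_bigl _ _ (@partition_set0 _)) big_pred1_eq.
  by rewrite ewensE /block_weight big_set0 cards0 divr1 mul1r.
case/andP => notis us sSN eNS.
have /setDP[iN iS] : i \in N :\: S by rewrite -eNS inE mem_head.
have notiA : i \notin (N :\ i) :\: S by rewrite !inE eqxx andbF.
have eNSi : [set x in s] = (N :\ i) :\: S.
  apply/setP => x; have /setP/(_ x) := eNS; rewrite !inE.
  by case: (x =P i) => [-> _ | _ /= ->]; rewrite ?(negbTE notis) //= andbF.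
rewrite IHs // ?subsetD1 ?sSN // /vbar_star -(setD_D1U1 iN iS) big_partition_setU1 //.
apply: eq_bigr => tau ptau; rewrite restr_ewens ?subsetD1 ?sSN // big_distrr.
apply: eq_bigr => B Btau /=; rewrite ewens_plus_to // setD_D1U1 //.
by rewrite cardsD (setIidPr sSN) mulrA (mulrC (ewens _ _ _)).
Qed.

Lemma eq_shapley N (v v' : {set U} -> R) i : i \in N ->
  {in powerset N, v =1 v'} -> shapley N v i = shapley N v' i.
Proof.
move=> iN vv'; apply: eq_bigr => S; rewrite powersetE => /subsetD1P[sSN _].
by rewrite !vv' // powersetE // subUset sSN sub1set.
Qed.

Lemma r_shapley_ewens N (w : tux U R) i : i \in N ->
  r_shapley (ewens R) N w i = MPW N w i.
Proof.
move=> iN; apply: eq_shapley => // S; rewrite powersetE => sSN.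
exact: restr_seq_ewens (enum_uniq _) sSN (set_enum _).
Qed.

End Ewens.

Theorem lemma1 (U : finType) (R : realFieldType) :
  (forall (N : {set U}) (w : tux U R), tux_game N w ->
   forall i : U, i \in N ->
   forall (S : {set U}) (pi : {set {set U}}),
     S \subset N :\ i -> partition pi ((N :\ i) :\: S) ->
     restr (@ewens U R) N i w S pi =
       1 / (#|N| - #|S|)%:R * w S (plus_to pi i set0)
       + \sum_(B in pi) (#|B|%:R / (#|N| - #|S|)%:R) * w S (plus_to pi i B))
  /\
  (forall (N : {set U}) (w : tux U R), tux_game N w ->
   forall i : U, i \in N ->
     r_shapley (@ewens U R) N w i = MPW N w i).
Proof.
split=> [N w _ i iN S pi | N w _ i iN]; first exact: restr_ewensE.
exact: r_shapley_ewens.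
Qed.
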